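(* Let $p,t\in\mathbb{R}$ and define, for $n\ge 0$, \[ a_n(p,t)=t\binom{np+1}{n}\frac{1}{np+1}+2(1-t)\binom{np+2}{n}\frac{1}{np+2}. \] If the sequence $(a_n(p,t))_{n\ge0}$ is positive definite, then \[ 2p-pt-t^2+3t-3\ge 0 . \] In particular $t\neq 2$, and either $p\le -3$ or $p\ge 1$.
   Context: For real $p,r$, the two-parameter Fuss (Raney) number $\binom{np+r}{n}\frac{r}{np+r}$ is defined to be $1$ for $n=0$ and $\frac{r}{n!}\prod_{i=1}^{n-1}(np+r-i)$ for $n\ge1$; the definition of $a_n(p,t)$ uses this convention with $r=1$ and $r=2$. A real sequence $(a_n)_{n\ge0}$ is called positive definite if $\sum_{i,j=0}^{m} a_{i+j}c_i\overline{c_j}\ge0$ for all $m$ and all $c_0,\dots,c_m\in\mathbb{C}$, equivalently if it is the moment sequence of a positive Borel measure on $\mathbb{R}$. *)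

From HB Require Import structures.
From mathcomp Require Import all_boot all_order all_algebra.
From mathcomp Require Import complex.
From mathcomp Require Import reals.
Set Implicit Arguments. Unset Strict Implicit. Unset Printing Implicit Defensive.
Import Order.TTheory GRing.Theory Num.Theory.
Local Open Scope ring_scope.

(* Two-parameter Fuss (Raney) number  binom(np+r, n) * r/(np+r), with the
   convention: 1 for n = 0 and  r/n! * prod_{i=1}^{n-1} (np + r - i)  for n >= 1. *)
Definition raney (R : realType) (p r : R) (n : nat) : R :=
  if n is 0 then 1
  else r / (n`!)%:R * \prod_(1 <= i < n) (n%:R * p + r - i%:R).

(* a_n(p,t) = t * binom(np+1,n)/(np+1) + 2(1-t) * binom(np+2,n)/(np+2)
            = t * raney p 1 n + (1 - t) * raney p 2 n *)
Definition a_seq (R : realType) (p t : R) (n : nat) : R :=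
  t * raney p 1 n + (1 - t) * raney p 2 n.

(* Positive definite real sequence: sum_{i,j<=m} a_{i+j} c_i conj(c_j) >= 0
   for all m and all complex c_0..c_m (order on R[i]: 0 <= z iff z real, >= 0). *)
Definition pos_def (R : realType) (a : nat -> R) : Prop :=
  forall (m : nat) (c : nat -> R[i]),
    0 <= \sum_(i < m.+1) \sum_(j < m.+1) ((a (i + j)%N)%:C%C * c i * (c j)^*%C).

From HB Require Import structures.
From mathcomp Require Import all_boot all_order all_algebra.
From mathcomp Require Import complex.
From mathcomp Require Import reals.
From mathcomp Require Import ring lra.
Import Order.TTheory GRing.Theory Num.Theory.
Local Open Scope ring_scope.

(* Positive definiteness is only used through its 2x2 Hankel minor
   a_0 a_2 - a_1^2 >= 0; since a_0 = 1, a_2 - a_1^2 equals the quadratic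
   q = 2p - pt - t^2 + 3t - 3.  The other two claims are elementary
   consequences: q = -1 at t = 2, and (p + 3)(p - 1) = 4q + (2t + p - 3)^2. *)

Lemma pos_def_quadratic (R : realType) (a : nat -> R) (x y : R) :
  pos_def a -> 0 <= a 0%N * x ^+ 2 + 2 * a 1%N * x * y + a 2%N * y ^+ 2.
Proof.
move=> /(_ 1%N (fun i => (if i == 0%N then x else y)%:C%C)).
rewrite !big_ord_recr !big_ord0 !conjc_real /= !add0r -!rmorphM -!rmorphD lecR.
by move=> /le_trans; apply; rewrite le_eqVlt; apply/predU1P; left; ring.
Qed.

Lemma pos_def_hankel2 (R : realType) (a : nat -> R) :
  pos_def a -> 0 <= a 0%N * (a 0%N * a 2%N - a 1%N ^+ 2).
Proof.
move=> /(pos_def_quadratic _ _ (a 1%N) (- a 0%N)).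
by move=> /le_trans; apply; rewrite le_eqVlt; apply/predU1P; left; ring.
Qed.

Lemma raney1 (R : realType) (p r : R) : raney p r 1 = r.
Proof. by rewrite /raney big_geq // mulr1 divr1. Qed.

Lemma raney2 (R : realType) (p r : R) :
  raney p r 2 = r * (2 * p + r - 1) / 2.
Proof. by rewrite /raney big_nat1 (_ : 2`! = 2)%N //; field. Qed.

Lemma a_seq0 (R : realType) (p t : R) : a_seq p t 0 = 1.
Proof. by rewrite /a_seq /=; ring. Qed.

Lemma a_seq_hankel2 (R : realType) (p t : R) :
  a_seq p t 2 - a_seq p t 1 ^+ 2 = 2 * p - p * t - t ^+ 2 + 3 * t - 3.
Proof. by rewrite /a_seq !raney1 !raney2; field. Qed.

Lemma fuss_quadratic_neq2 (R : realFieldType) (p t : R) :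
  0 <= 2 * p - p * t - t ^+ 2 + 3 * t - 3 -> t != 2.
Proof. by move=> q_ge0; apply/eqP => t2; move: q_ge0; rewrite t2 expr2; lra. Qed.

Lemma fuss_quadratic_p_range (R : realFieldType) (p t : R) :
  0 <= 2 * p - p * t - t ^+ 2 + 3 * t - 3 -> p <= -3 \/ 1 <= p.
Proof.
move=> q_ge0.
have prod_ge0 : 0 <= (p + 3) * (p - 1).
  have -> : (p + 3) * (p - 1)
    = 4 * (2 * p - p * t - t ^+ 2 + 3 * t - 3) + (2 * t + p - 3) ^+ 2 by ring.
  by apply: addr_ge0; [apply: mulr_ge0 | apply: sqr_ge0].
have [|p_gt] := lerP p (-3); [by left | right].
have p3_gt0 : 0 < p + 3 by lra.
by move: prod_ge0; rewrite pmulr_rge0 // subr_ge0.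
Qed.

Theorem mainTheorem1 (R : realType) (p t : R) :
  pos_def (a_seq p t) ->
  [/\ 0 <= 2 * p - p * t - t ^+ 2 + 3 * t - 3,
      t != 2
    & (p <= -3 \/ 1 <= p)].
Proof.
move=> /pos_def_hankel2; rewrite a_seq0 !mul1r a_seq_hankel2 => q_ge0.
by split; [| exact: fuss_quadratic_neq2 q_ge0 | exact: fuss_quadratic_p_range q_ge0].
Qed.
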